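(* Let $G$ be the infinite strong grid with vertex set $\mathbb{Z}^2$, where $(i_1,j_1)$ and $(i_2,j_2)$ are adjacent iff $\max\{|i_1-i_2|,|j_1-j_2|\}=1$. Let $L=\{k(2,1)+l(-1,3): k,l\in\mathbb{Z}\}$ and $L'=\{k(1,3)+l(2,-1): k,l\in\mathbb{Z}\}$ (both subgroups of $\mathbb{Z}^2$ of index $7$). Then: (1) if guards occupy exactly the vertices of a translate $p+L$ ($p\in\mathbb{Z}^2$), then for every vertex $v\in\mathbb{Z}^2$ there is a translate $q+L'$ with $v\in q+L'$ and a bijection $f:p+L\to q+L'$ such that for every $x\in p+L$ either $f(x)=x$ or $f(x)$ is adjacent to $x$; (2) symmetrically, if guards occupy exactly a translate $p'+L'$, then for every vertex $v$ there is a translate $q'+L$ containing $v$ and a bijection $f:p'+L'\to q'+L$ with each $f(x)$ equal or adjacent to $x$. Consequently, starting from guards on a translate of $L$ (one guard per vertex), the guards can respond to every infinite sequence of attacks in the all-guards-move eternal domination game on $G$, always keeping at most one guard per vertex, occupying each attacked vertex, and alternating between translates of $L$ and translates of $L'$ (each of which is a dominating set of $G$); i.e. they eternally dominate $G$.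
   Context: Eternal domination game (all-guards-move model): guards are placed on distinct vertices of a graph forming a dominating set; at each turn an attacker chooses a vertex, and then every guard may stay in place or move to an adjacent vertex, with no two guards ending on the same vertex, and some guard must end on the attacked vertex. The guards eternally dominate the graph if they can do so, maintaining a dominating set, against every infinite sequence of attacks. *)

From Stdlib Require Import ZArith Lia.
Open Scope Z_scope.

Definition vtx : Type := (Z * Z)%type.

Definition adj (u v : vtx) : Prop :=
  Z.max (Z.abs (fst u - fst v)) (Z.abs (snd u - snd v)) = 1.

Definition vset := vtx -> Prop.

Definition L : vset := fun x =>
  exists k l : Z, x = (2 * k - l, k + 3 * l).

Definition L' : vset := fun x =>
  exists k l : Z, x = (k + 2 * l, 3 * k - l).

Definition transl (S : vset) (p : vtx) : vset := fun x =>
  S (fst x - fst p, snd x - snd p).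

(* A legal all-guards move from configuration D to configuration D':
   a bijection f : D -> D' with each f(x) equal or adjacent to x. *)
Definition move (D D' : vset) : Prop :=
  exists f : vtx -> vtx,
    (forall x, D x -> D' (f x)) /\
    (forall x y, D x -> D y -> f x = f y -> x = y) /\
    (forall y, D' y -> exists x, D x /\ f x = y) /\
    (forall x, D x -> f x = x \/ adj x (f x)).

Definition dominating (D : vset) : Prop :=
  forall v, D v \/ exists u, D u /\ adj u v.

(* Guards on configuration D (one guard per vertex of D) eternally dominate
   the grid: D is dominating, and for every attacked vertex v there is a
   legal move to a configuration D' containing v from which the guards
   again eternally dominate (coinductively, i.e. against every infinite
   sequence of attacks). *)
CoInductive eternally_dominates (D : vset) : Prop :=
  ED : dominating D ->
       (forall v : vtx, exists D' : vset,
           move D D' /\ D' v /\ eternally_dominates D') ->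
       eternally_dominates D.

(* Translates of L are exactly the residue classes of x1 - 2 x2 modulo 7, and translates
   of L' those of x1 + 2 x2.  The seven displacements (0,0), (0,±1), (±1,±1) represent every
   residue modulo 7 exactly once for both linear forms.  Hence moving each guard of an L-class
   by the displacement that corrects its (x1 + 2 x2)-residue lands it in a prescribed L'-class,
   and the map is a bijection because that displacement can be read back from the
   (x1 - 2 x2)-residue; symmetrically from L' to L. *)
From Stdlib Require Import ZArith Lia.
Open Scope Z_scope.

(* Zdiv declares these instances only locally to the section defining [eqm]. *)
Existing Instances eqm_setoid Zplus_eqm Zminus_eqm.

Definition vadd (x d : vtx) : vtx := (fst x + fst d, snd x + snd d).
Definition vsub (y d : vtx) : vtx := (fst y - fst d, snd y - snd d).

Lemma vsubK (y d : vtx) : vadd (vsub y d) d = y.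
Proof. destruct y, d; unfold vadd, vsub; cbn; f_equal; ring. Qed.

Lemma vadd_inj (x y d : vtx) : vadd x d = vadd y d -> x = y.
Proof.
  destruct x, y, d; unfold vadd; cbn; intro E.
  injection E; intros; f_equal; lia.
Qed.

Definition additive (phi : vtx -> Z) : Prop := forall x d, phi (vadd x d) = phi x + phi d.

Lemma additive_vsub (chi : vtx -> Z) y d : additive chi -> chi (vsub y d) = chi y - chi d.
Proof. intro chi_add; rewrite <- (vsubK y d) at 2; rewrite chi_add; ring. Qed.

Definition residue_class (n : Z) (phi : vtx -> Z) (a : Z) : vset := fun x => eqm n (phi x) a.

Record residue_section (n : Z) (N : vtx -> Prop) (phi : vtx -> Z) (s : Z -> vtx) : Prop := {
  residue_section_in : forall e, N (s e);
  residue_section_eqm : forall e, eqm n (phi (s e)) e;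
  residue_section_inj : forall d d', N d -> N d' -> eqm n (phi d) (phi d') -> d = d' }.

Arguments residue_section_in {n N phi s}.
Arguments residue_section_eqm {n N phi s}.
Arguments residue_section_inj {n N phi s}.

Lemma residue_section_unique n N phi s d e :
  residue_section n N phi s -> N d -> eqm n (phi d) e -> s e = d.
Proof.
  intros [s_in s_eqm s_inj] Nd de.
  apply s_inj; [apply s_in | exact Nd |].
  now rewrite s_eqm, de.
Qed.

Lemma move_ext (D1 D1' D2 D2' : vset) :
  (forall x, D1 x <-> D2 x) -> (forall x, D1' x <-> D2' x) -> move D1 D1' -> move D2 D2'.
Proof.
  intros E E' [f [f_to [f_inj [f_onto f_near]]]].
  exists f; repeat split.
  - intros x Dx; apply E', f_to, E, Dx.
  - intros x y Dx Dy; apply f_inj; apply E; assumption.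
  - intros y Dy; destruct (f_onto y (proj2 (E' y) Dy)) as [x [Dx fx]].
    exists x; split; [apply E, Dx | exact fx].
  - intros x Dx; apply f_near, E, Dx.
Qed.

Section ResidueClassMove.

Variables (n : Z) (N : vtx -> Prop) (phi psi : vtx -> Z) (s t : Z -> vtx).
Hypotheses (phi_add : additive phi) (psi_add : additive psi).
Hypothesis N_near : forall x d, N d -> vadd x d = x \/ adj x (vadd x d).
Hypotheses (s_sec : residue_section n N phi s) (t_sec : residue_section n N psi t).

Lemma move_residue_class (a b : Z) : move (residue_class n phi a) (residue_class n psi b).
Proof.
  exists (fun x => vadd x (t (b - psi x))); repeat split.
  - intros x _; unfold residue_class.
    rewrite psi_add, (residue_section_eqm t_sec).
    now replace (psi x + (b - psi x)) with b by ring.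
  - intros x y ax ay exy; unfold residue_class in ax, ay.
    set (dx := t (b - psi x)) in exy; set (dy := t (b - psi y)) in exy.
    assert (same_disp : dx = dy).
    { apply (residue_section_inj s_sec); [apply (residue_section_in t_sec) .. |].
      replace (phi dx) with (phi y + phi dy - phi x)
        by (apply (f_equal phi) in exy; rewrite !phi_add in exy; lia).
      rewrite ax, ay; now replace (a + phi dy - a) with (phi dy) by ring. }
    rewrite same_disp in exy; exact (vadd_inj _ _ _ exy).
  - intros y yb; unfold residue_class in yb.
    set (d := s (phi y - a)).
    exists (vsub y d); split.
    + unfold residue_class; rewrite (additive_vsub _ _ _ phi_add).
      unfold d; rewrite (residue_section_eqm s_sec).
      now replace (phi y - (phi y - a)) with a by ring.
    + rewrite (residue_section_unique _ _ _ _ d _ t_sec); [apply vsubK | apply (residue_section_in s_sec) |].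
      rewrite (additive_vsub _ _ _ psi_add), yb.
      now replace (b - (b - psi d)) with (psi d) by ring.
  - intros x _; apply N_near, (residue_section_in t_sec).
Qed.

End ResidueClassMove.

Definition L_form (x : vtx) : Z := fst x - 2 * snd x.
Definition L'_form (x : vtx) : Z := fst x + 2 * snd x.

Lemma additive_L_form : additive L_form.
Proof. intros [x1 x2] [d1 d2]; unfold L_form, vadd; cbn [fst snd]; ring. Qed.

Lemma additive_L'_form : additive L'_form.
Proof. intros [x1 x2] [d1 d2]; unfold L'_form, vadd; cbn [fst snd]; ring. Qed.

Lemma transl_L_residue (p x : vtx) : transl L p x <-> residue_class 7 L_form (L_form p) x.
Proof.
  destruct p as [p1 p2], x as [x1 x2]; unfold transl, L, residue_class, eqm, L_form; cbn [fst snd].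
  split.
  - intros [k [l E]]; apply pair_equal_spec in E; Z.to_euclidean_division_equations; lia.
  - intro E; exists (x2 - p2 + 3 * ((x1 - 2 * x2 - (p1 - 2 * p2)) / 7)),
      (- ((x1 - 2 * x2 - (p1 - 2 * p2)) / 7)).
    f_equal; Z.to_euclidean_division_equations; lia.
Qed.

Lemma transl_L'_residue (p x : vtx) : transl L' p x <-> residue_class 7 L'_form (L'_form p) x.
Proof.
  destruct p as [p1 p2], x as [x1 x2]; unfold transl, L', residue_class, eqm, L'_form; cbn [fst snd].
  split.
  - intros [k [l E]]; apply pair_equal_spec in E; Z.to_euclidean_division_equations; lia.
  - intro E; exists ((x1 + 2 * x2 - (p1 + 2 * p2)) / 7),
      (3 * ((x1 + 2 * x2 - (p1 + 2 * p2)) / 7) - (x2 - p2)).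
    f_equal; Z.to_euclidean_division_equations; lia.
Qed.

Definition short_step (d : vtx) : Prop :=
  Z.abs (fst d) <= 1 /\ Z.abs (snd d) <= 1 /\ (snd d = 0 -> fst d = 0).

Lemma short_step_near (x d : vtx) : short_step d -> vadd x d = x \/ adj x (vadd x d).
Proof.
  destruct x as [x1 x2], d as [d1 d2]; unfold short_step, adj, vadd; cbn [fst snd].
  intros (d1_le & d2_le & d2_0); destruct (Z.eq_dec d2 0) as [d2_eq | d2_ne].
  - left; f_equal; lia.
  - right; lia.
Qed.

Definition centered_mod7 (e : Z) : Z := (e + 3) mod 7 - 3.

(* With r := centered_mod7 e in [-3, 3], these are the unique short steps on which
   L_form, resp. L'_form, takes the value r. *)
Definition L_step (e : Z) : vtx :=
  let r := centered_mod7 e in (r - 2 * Z.sgn r, - Z.sgn r).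
Definition L'_step (e : Z) : vtx :=
  let r := centered_mod7 e in (r - 2 * Z.sgn r, Z.sgn r).

Lemma residue_section_L_step : residue_section 7 short_step L_form L_step.
Proof.
  split; unfold short_step, L_step, L_form, centered_mod7, eqm.
  - intro e; cbn [fst snd]; Z.to_euclidean_division_equations; lia.
  - intro e; cbn [fst snd]; Z.to_euclidean_division_equations; lia.
  - intros [d1 d2] [d1' d2']; cbn [fst snd]; intros; f_equal;
      Z.to_euclidean_division_equations; lia.
Qed.

Lemma residue_section_L'_step : residue_section 7 short_step L'_form L'_step.
Proof.
  split; unfold short_step, L'_step, L'_form, centered_mod7, eqm.
  - intro e; cbn [fst snd]; Z.to_euclidean_division_equations; lia.
  - intro e; cbn [fst snd]; Z.to_euclidean_division_equations; lia.
  - intros [d1 d2] [d1' d2']; cbn [fst snd]; intros; f_equal;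
      Z.to_euclidean_division_equations; lia.
Qed.

Lemma move_L_L' (p q : vtx) : move (transl L p) (transl L' q).
Proof.
  apply (move_ext (residue_class 7 L_form (L_form p)) (residue_class 7 L'_form (L'_form q))).
  - intro x; symmetry; apply transl_L_residue.
  - intro x; symmetry; apply transl_L'_residue.
  - exact (move_residue_class 7 short_step L_form L'_form L_step L'_step
             additive_L_form additive_L'_form short_step_near
             residue_section_L_step residue_section_L'_step _ _).
Qed.

Lemma move_L'_L (p q : vtx) : move (transl L' p) (transl L q).
Proof.
  apply (move_ext (residue_class 7 L'_form (L'_form p)) (residue_class 7 L_form (L_form q))).
  - intro x; symmetry; apply transl_L'_residue.
  - intro x; symmetry; apply transl_L_residue.
  - exact (move_residue_class 7 short_step L'_form L_form L'_step L_step
             additive_L'_form additive_L_form short_step_near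
             residue_section_L'_step residue_section_L_step _ _).
Qed.

Lemma transl_self (S : vset) (p : vtx) : S (0, 0) -> transl S p p.
Proof. unfold transl; now rewrite !Z.sub_diag. Qed.

Lemma L_0 : L (0, 0).
Proof. now exists 0, 0. Qed.

Lemma L'_0 : L' (0, 0).
Proof. now exists 0, 0. Qed.

Lemma adj_sym (u v : vtx) : adj u v -> adj v u.
Proof. destruct u, v; unfold adj; cbn [fst snd]; lia. Qed.

Lemma dominating_of_moves (D : vset) :
  (forall v, exists D0, D0 v /\ move D0 D) -> dominating D.
Proof.
  intros cover v; destruct (cover v) as [D0 [D0v [f [f_to [_ [_ f_near]]]]]].
  destruct (f_near v D0v) as [fixed | moved].
  - left; rewrite <- fixed; exact (f_to v D0v).
  - right; exists (f v); split; [exact (f_to v D0v) | exact (adj_sym _ _ moved)].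
Qed.

Lemma eternally_dominates_coind (C : vset -> Prop) :
  (forall D, C D -> dominating D) ->
  (forall D, C D -> forall v, exists D', C D' /\ move D D' /\ D' v) ->
  forall D, C D -> eternally_dominates D.
Proof.
  intros C_dom C_step; cofix CH; intros D CD.
  constructor; [exact (C_dom D CD) |].
  intro v; destruct (C_step D CD v) as [D' [CD' [m D'v]]].
  exists D'; exact (conj m (conj D'v (CH D' CD'))).
Qed.

Definition lattice_config (D : vset) : Prop :=
  (exists p, D = transl L p) \/ (exists p, D = transl L' p).

Lemma lattice_config_dominating (D : vset) : lattice_config D -> dominating D.
Proof.
  intros [[p ->] | [p ->]]; apply dominating_of_moves; intro v.
  - exists (transl L' v); split; [apply transl_self, L'_0 | apply move_L'_L].
  - exists (transl L v); split; [apply transl_self, L_0 | apply move_L_L'].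
Qed.

Lemma lattice_config_step (D : vset) :
  lattice_config D -> forall v, exists D', lattice_config D' /\ move D D' /\ D' v.
Proof.
  intros [[p ->] | [p ->]] v.
  - exists (transl L' v); split; [right; now exists v |].
    split; [apply move_L_L' | apply transl_self, L'_0].
  - exists (transl L v); split; [left; now exists v |].
    split; [apply move_L'_L | apply transl_self, L_0].
Qed.

Theorem mainTheorem1 :
  (forall p v : vtx, exists q : vtx,
      transl L' q v /\ move (transl L p) (transl L' q)) /\
  (forall p' v : vtx, exists q' : vtx,
      transl L q' v /\ move (transl L' p') (transl L q')) /\
  (forall p : vtx, eternally_dominates (transl L p)).
Proof.
  split; [| split].
  - intros p v; exists v; split; [apply transl_self, L'_0 | apply move_L_L'].
  - intros p v; exists v; split; [apply transl_self, L_0 | apply move_L'_L].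
  - intro p; apply (eternally_dominates_coind lattice_config).
    + exact lattice_config_dominating.
    + exact lattice_config_step.
    + left; now exists p.
Qed.
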